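(* Let $\tau\colon\tilde{\mathcal{E}}\to\mathcal{E}$ be a finite-dimensional irreducible Abelian covering and let $\omega$ be a nontrivial conservation law of $\mathcal{E}$. Then the pull-back $\tau^*\omega$ is a trivial conservation law of $\tilde{\mathcal{E}}$ if and only if $[\omega]\in\mathcal{L}_\tau$.
   Context: Setting: $\mathcal{E}$ is a differentially connected infinitely prolonged equation with two independent variables $x,y$ and total derivatives $D_x,D_y$. A conservation law is a horizontal 1-form $\omega=X\,dx+Y\,dy$ with $D_xY-D_yX=0$; it is trivial if $\omega=d_hP=D_xP\,dx+D_yP\,dy$ for some function $P$; $\mathrm{CL}(\mathcal{E})$ is the space of conservation laws modulo trivial ones. For a covering $\tau\colon\tilde{\mathcal{E}}\to\mathcal{E}$ with total derivatives $\tilde D_x,\tilde D_y$, conservation laws of $\tilde{\mathcal{E}}$ and their triviality are defined the same way using $\tilde D_x,\tilde D_y$ and functions on $\tilde{\mathcal{E}}$. A covering of rank $r$ is Abelian if fiber coordinates $w^1,\dots,w^r$ can be chosen with $\tilde D_x=D_x+\sum_\alpha X^\alpha\partial/\partial w^\alpha$, $\tilde D_y=D_y+\sum_\alpha Y^\alpha\partial/\partial w^\alpha$, $X^\alpha,Y^\alpha\in\mathcal{F}(\mathcal{E})$; it is irreducible if $\tilde D_xh=\tilde D_yh=0$ has only constant solutions. $\mathcal{L}_\tau\subset\mathrm{CL}(\mathcal{E})$ is the subspace spanned by the classes $[X^\alpha dx+Y^\alpha dy]$, $\alpha=1,\dots,r$ (it depends only on the equivalence class of $\tau$). *)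

(* Abstract differential-algebraic model of an infinitely
   prolonged equation with two independent variables and of an Abelian
   covering over it. *)
From HB Require Import structures.
From mathcomp Require Import all_boot all_order all_algebra.
Set Implicit Arguments. Unset Strict Implicit. Unset Printing Implicit Defensive.
Import GRing.Theory.
Local Open Scope ring_scope.

Definition is_derivation (R : realFieldType) (A : comAlgType R) (D : A -> A) : Prop :=
  (forall (k : R) (a b : A), D (k *: a + b) = k *: D a + D b) /\
  (forall a b : A, D (a * b) = D a * b + a * D b).

(* The equation E: F(E) = A, total derivatives Dx, Dy (commuting derivations),
   differentially connected. *)
Record equation (R : realFieldType) (A : comAlgType R) (Dx Dy : A -> A) : Prop := {
  eq_derx : is_derivation Dx;
  eq_dery : is_derivation Dy;
  eq_comm : forall a, Dx (Dy a) = Dy (Dx a);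
  eq_dconn : forall a, Dx a = 0 -> Dy a = 0 -> exists c : R, a = c%:A }.

(* Conservation law  omega = X dx + Y dy  w.r.t. total derivatives Dx, Dy. *)
Definition cons_law (R : realFieldType) (A : comAlgType R) (Dx Dy : A -> A) (X Y : A) : Prop :=
  Dx Y - Dy X = 0.

Definition trivial_cl (R : realFieldType) (A : comAlgType R) (Dx Dy : A -> A) (X Y : A) : Prop :=
  exists P : A, X = Dx P /\ Y = Dy P.

(* Total derivative on the covering:  D~ = D + sum_alpha X^alpha d/dw^alpha,
   where D (= Dl) is the total derivative of E acting on the jet variables,
   with the fiber coordinates w treated as parameters. *)
Definition tot_der (R : realFieldType) (A B : comAlgType R) (r : nat)
  (iota : A -> B) (d : 'I_r -> B -> B) (Dl : B -> B) (Xs : 'I_r -> A) (f : B) : B :=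
  Dl f + \sum_(i < r) iota (Xs i) * d i f.

(* Abelian covering of rank r over E: F(E~) = B, tau^* = iota,
   fiber coordinates w^alpha, vertical fields d alpha = d/dw^alpha,
   lifts Dxl, Dyl of D_x, D_y, and X^alpha = Xs alpha, Y^alpha = Ys alpha. *)
Record abelian_covering (R : realFieldType) (A B : comAlgType R) (Dx Dy : A -> A)
  (r : nat) (iota : {lrmorphism A -> B}) (w : 'I_r -> B) (d : 'I_r -> B -> B)
  (Dxl Dyl : B -> B) (Xs Ys : 'I_r -> A) : Prop := {
  cov_inj : injective iota;
  cov_d_der : forall i, is_derivation (d i);
  cov_d_base : forall i a, d i (iota a) = 0;
  cov_d_w : forall i j, d i (w j) = (i == j)%:R;
  cov_d_comm : forall i j f, d i (d j f) = d j (d i f);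
  cov_d_ker : forall f, (forall i, d i f = 0) -> exists a, f = iota a;
  cov_Dxl_der : is_derivation Dxl;
  cov_Dyl_der : is_derivation Dyl;
  cov_Dxl_base : forall a, Dxl (iota a) = iota (Dx a);
  cov_Dyl_base : forall a, Dyl (iota a) = iota (Dy a);
  cov_Dxl_w : forall i, Dxl (w i) = 0;
  cov_Dyl_w : forall i, Dyl (w i) = 0;
  cov_Dxl_d : forall i f, d i (Dxl f) = Dxl (d i f);
  cov_Dyl_d : forall i f, d i (Dyl f) = Dyl (d i f);
  cov_Dl_comm : forall f, Dxl (Dyl f) = Dyl (Dxl f);
  cov_integrable : forall f,
    tot_der iota d Dxl Xs (tot_der iota d Dyl Ys f) =
    tot_der iota d Dyl Ys (tot_der iota d Dxl Xs f) }.

Definition irreducible_cov (R : realFieldType) (B : comAlgType R) (tDx tDy : B -> B) : Prop :=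
  forall h : B, tDx h = 0 -> tDy h = 0 -> exists c : R, h = c%:A.

(* [X dx + Y dy] lies in L_tau = span of the classes [X^alpha dx + Y^alpha dy]. *)
Definition in_L_tau (R : realFieldType) (A : comAlgType R) (Dx Dy : A -> A) (r : nat)
  (Xs Ys : 'I_r -> A) (X Y : A) : Prop :=
  exists c : 'I_r -> R,
    trivial_cl Dx Dy (X - \sum_(i < r) c i *: Xs i) (Y - \sum_(i < r) c i *: Ys i).

(* On the "affine" functions of the
   covering one computes
       D~x (tau^* P + sum_j c_j w^j) = tau^*(Dx P + sum_j c_j X^j)      (same for y),
   which gives at once: if [omega] lies in L_tau, i.e. omega minus the
   combination sum_j c_j (X^j dx + Y^j dy) equals d_h P, then
   tau^* omega = d_h (tau^* P + sum_j c_j w^j) is trivial.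
   Conversely, if tau^* omega = d_h Q, then since the vertical fields d/dw^j
   commute with D~x and D~y and kill pulled-back functions, each d Q/dw^j is a
   first integral of the covering, hence a constant c_j by irreducibility;
   then Q - sum_j c_j w^j is killed by all d/dw^j, so it is tau^* P, and the
   computation above shows omega - sum_j c_j (X^j dx + Y^j dy) = d_h P.

   Neither direction
   uses that E is an equation, that omega is conserved, or that it is
   nontrivial; these hypotheses of the theorem only fix its setting. *)
From HB Require Import structures.
From mathcomp Require Import all_boot all_order all_algebra.
Set Implicit Arguments. Unset Strict Implicit. Unset Printing Implicit Defensive.
Local Open Scope ring_scope.
Import GRing.Theory.

Section Derivations.
Variables (R : realFieldType) (A : comAlgType R) (D : A -> A).
Hypothesis D_der : is_derivation D.

Lemma derD a b : D (a + b) = D a + D b.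
Proof. by have [lin _] := D_der; have := lin 1 a b; rewrite !scale1r. Qed.

Lemma der0 : D 0 = 0.
Proof. by apply: (@addrI _ (D 0)); rewrite -derD !addr0. Qed.

Lemma derZ k a : D (k *: a) = k *: D a.
Proof. by have [lin _] := D_der; have := lin k a 0; rewrite !addr0 der0 addr0. Qed.

Lemma derB a b : D (a - b) = D a - D b.
Proof. by rewrite -scaleN1r derD derZ scaleN1r. Qed.

Lemma der_sum (I : Type) (s : seq I) (P : pred I) (F : I -> A) :
  D (\sum_(i <- s | P i) F i) = \sum_(i <- s | P i) D (F i).
Proof. by elim/big_rec2: _ => [|i y1 y2 _ IH]; rewrite ?der0 // derD IH. Qed.

End Derivations.

Section LiftedTotalDerivative.
Variables (R : realFieldType) (A B : comAlgType R) (r : nat).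
Variables (iota : {lrmorphism A -> B}) (w : 'I_r -> B) (d : 'I_r -> B -> B).
Variables (Db : A -> A) (Dl : B -> B) (Zs : 'I_r -> A).
Hypothesis d_der : forall i, is_derivation (d i).
Hypothesis Dl_der : is_derivation Dl.

Local Notation tD := (tot_der iota d Dl Zs).

Lemma tot_der_derivation : is_derivation tD.
Proof.
split=> [k f g | f g]; rewrite /tot_der.
  rewrite (derD Dl_der) (derZ Dl_der).
  under eq_bigr => i _ do rewrite (derD (d_der i)) (derZ (d_der i)) mulrDr -scalerAr.
  by rewrite big_split /= -scaler_sumr scalerDr addrACA.
have [_ Dl_mul] := Dl_der.
under eq_bigr => i _ do have [_ ->] := d_der i.
rewrite Dl_mul mulrDl mulrDr mulr_suml mulr_sumr addrACA -big_split /=.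
by congr (_ + _); apply: eq_bigr => i _; rewrite mulrDr mulrA mulrCA.
Qed.

Hypothesis d_base : forall i a, d i (iota a) = 0.
Hypothesis d_w : forall i j, d i (w j) = (i == j)%:R.
Hypothesis Dl_base : forall a, Dl (iota a) = iota (Db a).
Hypothesis Dl_w : forall i, Dl (w i) = 0.

Lemma tot_der_base a : tD (iota a) = iota (Db a).
Proof. by rewrite /tot_der Dl_base big1 ?addr0 // => i _; rewrite d_base mulr0. Qed.

Lemma tot_der_w j : tD (w j) = iota (Zs j).
Proof.
rewrite /tot_der Dl_w add0r (bigD1 j) //= d_w eqxx mulr1 big1 ?addr0 // => i ij.
by rewrite d_w (negPf ij) mulr0.
Qed.

Lemma tot_der_affine P (c : 'I_r -> R) :
  tD (iota P + \sum_(j < r) c j *: w j) = iota (Db P + \sum_(j < r) c j *: Zs j).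
Proof.
have tD_der := tot_der_derivation.
rewrite (derD tD_der) (der_sum tD_der) tot_der_base rmorphD raddf_sum /=.
by congr (_ + _); apply: eq_bigr => j _; rewrite (derZ tD_der) tot_der_w linearZ.
Qed.

Hypothesis d_comm : forall i j f, d i (d j f) = d j (d i f).
Hypothesis d_Dl : forall i f, d i (Dl f) = Dl (d i f).

Lemma d_tot_der_comm j f : d j (tD f) = tD (d j f).
Proof.
rewrite /tot_der (derD (d_der j)) d_Dl (der_sum (d_der j)); congr (_ + _).
apply: eq_bigr => i _; have [_ ->] := d_der j.
by rewrite d_base mul0r add0r d_comm.
Qed.

End LiftedTotalDerivative.

Section AbelianCovering.
Variables (R : realFieldType) (A B : comAlgType R) (Dx Dy : A -> A) (r : nat).
Variables (iota : {lrmorphism A -> B}) (w : 'I_r -> B) (d : 'I_r -> B -> B).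
Variables (Dxl Dyl : B -> B) (Xs Ys : 'I_r -> A).
Hypothesis cov : abelian_covering Dx Dy iota w d Dxl Dyl Xs Ys.

Local Notation tDx := (tot_der iota d Dxl Xs).
Local Notation tDy := (tot_der iota d Dyl Ys).

Lemma tot_der_x_affine P (c : 'I_r -> R) :
  tDx (iota P + \sum_(j < r) c j *: w j) = iota (Dx P + \sum_(j < r) c j *: Xs j).
Proof.
exact: (tot_der_affine Xs (cov_d_der cov) (cov_Dxl_der cov) (cov_d_base cov)
  (cov_d_w cov) (cov_Dxl_base cov) (cov_Dxl_w cov)).
Qed.

Lemma tot_der_y_affine P (c : 'I_r -> R) :
  tDy (iota P + \sum_(j < r) c j *: w j) = iota (Dy P + \sum_(j < r) c j *: Ys j).
Proof.
exact: (tot_der_affine Ys (cov_d_der cov) (cov_Dyl_der cov) (cov_d_base cov)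
  (cov_d_w cov) (cov_Dyl_base cov) (cov_Dyl_w cov)).
Qed.

Lemma fibre_affine f (c : 'I_r -> R) :
  (forall i, d i f = (c i)%:A) -> exists P, f = iota P + \sum_(j < r) c j *: w j.
Proof.
move=> df; have d_der := cov_d_der cov.
have [P eP] : exists P, f - \sum_(j < r) c j *: w j = iota P.
  apply: (cov_d_ker cov) => i; rewrite (derB (d_der i)) (der_sum (d_der i)) df.
  rewrite (bigD1 i) //= (derZ (d_der i)) (cov_d_w cov) eqxx big1 ?addr0 ?subrr //.
  by move=> j ji; rewrite (derZ (d_der i)) (cov_d_w cov) eq_sym (negPf ji) scaler0.
by exists P; rewrite -eP subrK.
Qed.

(* The fibre derivatives of a potential of a pulled-back form are first
   integrals of the covering, since d/dw^j commutes with D~x, D~y and kills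
   pulled-back functions. *)
Lemma fibre_derivative_first_integral j Q (a b : A) :
  tDx Q = iota a -> tDy Q = iota b -> tDx (d j Q) = 0 /\ tDy (d j Q) = 0.
Proof.
move=> eX eY; split.
  rewrite -(d_tot_der_comm Xs (cov_d_der cov) (cov_d_base cov) (cov_d_comm cov)
    (cov_Dxl_d cov)).
  by rewrite eX (cov_d_base cov).
rewrite -(d_tot_der_comm Ys (cov_d_der cov) (cov_d_base cov) (cov_d_comm cov)
  (cov_Dyl_d cov)).
by rewrite eY (cov_d_base cov).
Qed.

Lemma pullback_trivial_of_L X Y :
  in_L_tau Dx Dy Xs Ys X Y -> trivial_cl tDx tDy (iota X) (iota Y).
Proof.
move=> [c [P [eX eY]]]; exists (iota P + \sum_(j < r) c j *: w j).
by rewrite tot_der_x_affine tot_der_y_affine -eX -eY !subrK.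
Qed.

Hypothesis irr : irreducible_cov tDx tDy.

(* Conversely, a potential Q of the pull-back has constant fibre derivatives
   (they are first integrals), so it is affine and exhibits [omega] in L_tau. *)
Lemma L_of_pullback_trivial X Y :
  trivial_cl tDx tDy (iota X) (iota Y) -> in_L_tau Dx Dy Xs Ys X Y.
Proof.
move=> [Q [eX eY]].
have first_integral j : exists c : R, d j Q = c%:A.
  by have [] := fibre_derivative_first_integral j (esym eX) (esym eY); apply: irr.
have [c dQ] := fin_all_exists first_integral.
have [P eQ] := fibre_affine dQ.
exists c, P; split; apply: (cov_inj cov); rewrite rmorphB /=.
  by rewrite eX eQ tot_der_x_affine rmorphD /= addrK.
by rewrite eY eQ tot_der_y_affine rmorphD /= addrK.
Qed.

End AbelianCovering.

Theorem mainTheorem3 (R : realFieldType) (A B : comAlgType R) (Dx Dy : A -> A)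
  (r : nat) (iota : {lrmorphism A -> B}) (w : 'I_r -> B) (d : 'I_r -> B -> B)
  (Dxl Dyl : B -> B) (Xs Ys : 'I_r -> A) :
  equation Dx Dy ->
  abelian_covering Dx Dy iota w d Dxl Dyl Xs Ys ->
  irreducible_cov (tot_der iota d Dxl Xs) (tot_der iota d Dyl Ys) ->
  forall X Y : A, cons_law Dx Dy X Y -> ~ trivial_cl Dx Dy X Y ->
  (trivial_cl (tot_der iota d Dxl Xs) (tot_der iota d Dyl Ys) (iota X) (iota Y)
   <-> in_L_tau Dx Dy Xs Ys X Y).
Proof.
move=> _ cov irr X Y _ _; split.
- exact: (L_of_pullback_trivial cov irr).
- exact: (pullback_trivial_of_L cov).
Qed.
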